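(* Let $\mathcal{G}=(\mathcal{V},\mathcal{E},\mathcal{W})$ be an undirected weighted graph in which exactly one edge $e_-=(u,v)$ has negative weight and all other edges have positive weight. Let $\mathcal{G}_+=(\mathcal{V},\mathcal{E}\setminus\{e_-\},\mathcal{W})$ and assume $\mathcal{G}_+$ is connected. Then $L(\mathcal{G})$ is positive semi-definite if and only if $|\mathcal{W}(e_-)|\le \mathcal{R}_{uv}(\mathcal{G}_+)^{-1}$.
   Context: Weights $\mathcal{W}:\mathcal{E}\to\mathbb{R}\setminus\{0\}$; $W$ is the diagonal weight matrix; with an arbitrary edge orientation the incidence matrix $E$ has in the column of edge $(i,j)$ entry $+1$ in row $i$, $-1$ in row $j$, $0$ elsewhere; $L(\mathcal{G})=EWE^T$. For a weighted graph $\mathcal{H}$ on $\mathcal{V}$, the effective resistance between nodes $u,v$ is $\mathcal{R}_{uv}(\mathcal{H})=(\mathbf{e}_u-\mathbf{e}_v)^TL^{\dagger}(\mathcal{H})(\mathbf{e}_u-\mathbf{e}_v)$, where $L^{\dagger}$ is the Moore–Penrose pseudo-inverse and $\mathbf{e}_u$ is the standard basis vector of node $u$. *)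

From HB Require Import structures.
From mathcomp Require Import all_boot all_order all_algebra.
From Stdlib Require Import ClassicalEpsilon.
Set Implicit Arguments. Unset Strict Implicit. Unset Printing Implicit Defensive.
Import Order.TTheory GRing.Theory Num.Theory.
Local Open Scope ring_scope.

(* A weighted graph on vertex set 'I_n with m edges; edge k joins src k and
   dst k (arbitrary orientation) and has weight wt k. *)

Definition incidence (R : ringType) (n m : nat) (src dst : 'I_m -> 'I_n)
  : 'M[R]_(n, m) :=
  \matrix_(i < n, k < m) ((i == src k)%:R - (i == dst k)%:R).

Definition laplacian (R : ringType) (n m : nat) (src dst : 'I_m -> 'I_n)
  (wt : 'I_m -> R) : 'M[R]_n :=
  incidence R src dst *m diag_mx (\row_k wt k) *m (incidence R src dst)^T.

Definition simple_graph (n m : nat) (src dst : 'I_m -> 'I_n) : Prop :=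
  (forall k, src k != dst k) /\
  (forall k l, k != l ->
     ~ ((src k == src l) && (dst k == dst l) || (src k == dst l) && (dst k == src l))).

Definition adj (n m : nat) (src dst : 'I_m -> 'I_n) : rel 'I_n :=
  fun i j => [exists k, ((src k == i) && (dst k == j)) || ((src k == j) && (dst k == i))].

Definition connected_graph (n m : nat) (src dst : 'I_m -> 'I_n) : Prop :=
  forall i j, connect (adj src dst) i j.

(* Positive semi-definite (for the symmetric matrices considered here). *)
Definition psd (R : numDomainType) (n : nat) (A : 'M[R]_n) : Prop :=
  forall x : 'cV[R]_n, 0 <= (x^T *m A *m x) 0 0.

(* Moore–Penrose pseudo-inverse (real case: transpose = conjugate transpose). *)
Definition is_MP_inverse (R : ringType) (n : nat) (A X : 'M[R]_n) : Prop :=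
  [/\ A *m X *m A = A, X *m A *m X = X, (A *m X)^T = A *m X & (X *m A)^T = X *m A].

Definition pinv (R : ringType) (n : nat) (A : 'M[R]_n) : 'M[R]_n :=
  epsilon (inhabits A) (is_MP_inverse A).

Definition basis_vec (R : ringType) (n : nat) (u : 'I_n) : 'cV[R]_n :=
  \col_i (i == u)%:R.

Definition eff_res (R : ringType) (n m : nat) (src dst : 'I_m -> 'I_n)
  (wt : 'I_m -> R) (u v : 'I_n) : R :=
  let b := basis_vec R u - basis_vec R v in
  (b^T *m pinv (laplacian src dst wt) *m b) 0 0.

From HB Require Import structures.
From mathcomp Require Import all_boot all_order all_algebra.
From Stdlib Require Import ClassicalEpsilon.
From mathcomp Require Import ring lra.
Set Implicit Arguments. Unset Strict Implicit. Unset Printing Implicit Defensive.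
Import Order.TTheory GRing.Theory Num.Theory.
Local Open Scope ring_scope.

(* Write y for the solution of L(G_+) y = e_u - e_v given by the pseudo-inverse
   (it exists because G_+ is connected), and B_+ for the quadratic form of
   L(G_+).  Then B_+(y, x) = x_u - x_v, so R_uv(G_+) = B_+(y, y) = r > 0 and
   x^T L(G) x = W(e_-) B_+(y, x)^2 + B_+(x, x).  By Cauchy-Schwarz
   B_+(y, x)^2 <= r B_+(x, x), so the form is nonnegative when |W(e_-)| r <= 1;
   conversely, its value r - |W(e_-)| r^2 at x = y forces |W(e_-)| r <= 1. *)

Lemma sum_delta_mull (R : nzRingType) n (u : 'I_n) (F : 'I_n -> R) :
  \sum_i (i == u)%:R * F i = F u.
Proof.
rewrite (bigD1 u) //= eqxx mul1r big1 ?addr0 // => i /negbTE ->.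
by rewrite mul0r.
Qed.

Definition edge_diff (R : nzRingType) n m (s d : 'I_m -> 'I_n) (x : 'cV[R]_n) k :=
  x (s k) 0 - x (d k) 0.

Definition lapform (R : nzRingType) n m (s d : 'I_m -> 'I_n) (w : 'I_m -> R)
    (y x : 'cV[R]_n) :=
  \sum_k w k * (edge_diff s d y k * edge_diff s d x k).

Section Laplacian.

Variables (R : comNzRingType) (n m : nat) (s d : 'I_m -> 'I_n) (w : 'I_m -> R).

Lemma trmx_incidence_mul p (X : 'M[R]_(n, p)) k j :
  ((incidence R s d)^T *m X) k j = X (s k) j - X (d k) j.
Proof.
rewrite mxE; under eq_bigr => i _ do rewrite !mxE mulrBl.
by rewrite sumrB !sum_delta_mull.
Qed.

Lemma laplacian_bilinear (y x : 'cV[R]_n) :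
  (y^T *m laplacian s d w *m x) 0 0 = lapform s d w y x.
Proof.
rewrite /laplacian !mulmxA -[y^T *m _]trmxK trmx_mul trmxK -mulmxA mxE.
apply: eq_bigr => k _.
rewrite mul_mx_diag mxE [X in X * _ * _]mxE !trmx_incidence_mul mxE /edge_diff.
ring.
Qed.

Lemma trmx_laplacian : (laplacian s d w)^T = laplacian s d w.
Proof. by rewrite /laplacian !trmx_mul tr_diag_mx trmxK mulmxA. Qed.

Lemma laplacian_mul_const : laplacian s d w *m const_mx 1 = 0 :> 'M[R]_n.
Proof.
have EJ : (incidence R s d)^T *m (const_mx 1 : 'M[R]_n) = 0.
  by apply/matrixP => k j; rewrite trmx_incidence_mul !mxE subrr.
by rewrite /laplacian -mulmxA EJ mulmx0.
Qed.

Lemma lapform_subZ (x y : 'cV[R]_n) t :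
  lapform s d w (x - t *: y) (x - t *: y) =
  lapform s d w x x - t * (2 * lapform s d w y x) + t ^+ 2 * lapform s d w y y.
Proof.
rewrite /lapform !mulr_sumr -sumrB -big_split /=.
by apply: eq_bigr => k _; rewrite /edge_diff !mxE; ring.
Qed.

End Laplacian.

Lemma lapform_bigD1 (R : comNzRingType) n m (s d : 'I_m.+1 -> 'I_n)
    (w : 'I_m.+1 -> R) k0 x :
  lapform s d w x x = w k0 * (edge_diff s d x k0 * edge_diff s d x k0) +
    lapform (fun j => s (lift k0 j)) (fun j => d (lift k0 j))
            (fun j => w (lift k0 j)) x x.
Proof. by rewrite /lapform (bigD1_ord k0). Qed.

Lemma trmx_basis_diff_mul (R : nzRingType) n (u v : 'I_n) (x : 'cV[R]_n) :
  ((basis_vec R u - basis_vec R v)^T *m x) 0 0 = x u 0 - x v 0.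
Proof.
rewrite mxE; under eq_bigr => i _ do rewrite !mxE mulrBl.
by rewrite sumrB !sum_delta_mull.
Qed.

Lemma trmx_mul_self_eq0 (R : realFieldType) n (z : 'cV[R]_n) :
  (z^T *m z) 0 0 = 0 -> z = 0.
Proof.
rewrite mxE => /psumr_eq0P z0.
have {}z0 i : z^T 0 i * z i 0 = 0.
  by apply: z0 => // l _; rewrite mxE -expr2 sqr_ge0.
apply/matrixP => i j; rewrite (ord1 j) [RHS]mxE.
by have /eqP := z0 i; rewrite mxE -expr2 sqrf_eq0 => /eqP.
Qed.

Lemma quadratic_ge0_discriminant (R : realFieldType) (a b c : R) : 0 <= b ->
  (forall t, 0 <= a - t * (2 * c) + t ^+ 2 * b) -> c ^+ 2 <= a * b.
Proof.
rewrite le_eqVlt => /orP [/eqP <- | b_gt0] hq.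
  have [-> | c_neq0] := eqVneq c 0; first by rewrite expr2 !mulr0.
  have := hq ((a + 1) / (2 * c)).
  by rewrite mulr0 addr0 divfK ?mulf_neq0 ?pnatr_eq0 //; lra.
have := hq (c / b); rewrite -ler_pdivrMr // => ineq.
have -> : c ^+ 2 / b = c / b * (2 * c) - (c / b) ^+ 2 * b.
  by field; rewrite gt_eqF.
lra.
Qed.

Definition const_shift (R : fieldType) n (A : 'M[R]_n) : 'M[R]_n :=
  A + n%:R^-1 *: const_mx 1.

Section PositiveWeights.

Variables (R : realFieldType) (n m : nat) (s d : 'I_m -> 'I_n) (w : 'I_m -> R).

Lemma lapform_ge0 x : (forall k, 0 <= w k) -> 0 <= lapform s d w x x.
Proof.
by move=> w_ge0; apply: sumr_ge0 => k _; rewrite mulr_ge0 // -expr2 sqr_ge0.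
Qed.

Lemma lapform_cauchy_schwarz x y : (forall k, 0 <= w k) ->
  lapform s d w y x ^+ 2 <= lapform s d w x x * lapform s d w y y.
Proof.
move=> w_ge0; apply: quadratic_ge0_discriminant; first exact: lapform_ge0.
by move=> t; rewrite -lapform_subZ lapform_ge0.
Qed.

Hypothesis w_gt0 : forall k, 0 < w k.
Hypothesis connected_sd : connected_graph s d.

Lemma lapform_eq0_const x : lapform s d w x x = 0 -> forall i j, x i 0 = x j 0.
Proof.
move=> /psumr_eq0P x0 i j.
have term_ge0 k : true -> 0 <= w k * (edge_diff s d x k * edge_diff s d x k).
  by move=> _; apply: mulr_ge0; [exact: ltW | rewrite -expr2 sqr_ge0].
have diff0 k : edge_diff s d x k = 0.
  have /eqP := x0 term_ge0 k isT.
  by rewrite mulf_eq0 gt_eqF //= -expr2 sqrf_eq0 => /eqP.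
have closed_level : closed (adj s d) [pred l | x l 0 == x i 0].
  move=> a b /existsP [k /orP [] /andP [/eqP <- /eqP <-]];
  by have /eqP := diff0 k; rewrite subr_eq0 !inE => /eqP ->.
have := closed_connect closed_level (connected_sd i j).
by rewrite !inE eqxx => /esym/eqP ->.
Qed.

Lemma laplacian_kernel_const (z : 'cV[R]_n) :
  laplacian s d w *m z = 0 -> forall i j, z i 0 = z j 0.
Proof.
move=> Lz; apply: lapform_eq0_const.
by rewrite -laplacian_bilinear -mulmxA Lz mulmx0 mxE.
Qed.

Lemma laplacian_const_shift_unit : (0 < n)%N ->
  const_shift (laplacian s d w) \in unitmx.
Proof.
move=> n_gt0; rewrite unitmxE unitfE; apply/negP => /det0P [v v_neq0 vM].
have i0 : 'I_n := Ordinal n_gt0.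
have : (v *m const_shift (laplacian s d w) *m v^T) 0 0 = 0.
  by rewrite vM mul0mx mxE.
rewrite /const_shift mulmxDr mulmxDl -scalemxAr -scalemxAl mxE [X in _ + X]mxE.
rewrite -{1}(trmxK v) laplacian_bilinear.
have -> : (v *m const_mx 1 *m v^T) 0 0 = (\sum_i v 0 i) ^+ 2.
  rewrite mxE expr2 mulr_sumr; apply: eq_bigr => l _; rewrite [v^T _ _]mxE mxE.
  by congr (_ * _); apply: eq_bigr => i _; rewrite mxE mulr1.
have form_ge0 : 0 <= lapform s d w v^T v^T by apply: lapform_ge0 => k; exact: ltW.
have J_ge0 : 0 <= n%:R^-1 * (\sum_i v 0 i) ^+ 2.
  by apply: mulr_ge0; [rewrite invr_ge0 ler0n | exact: sqr_ge0].
move/eqP; rewrite paddr_eq0 // => /andP [/eqP/lapform_eq0_const v_const].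
have -> : \sum_i v 0 i = n%:R * v 0 i0.
  rewrite mulr_natl -[n in _ *+ n]card_ord -sumr_const.
  by apply: eq_bigr => i _; have := v_const i i0; rewrite !mxE.
have n_neq0 : (n%:R : R) != 0 by rewrite pnatr_eq0 -lt0n.
rewrite mulf_eq0 invr_eq0 (negbTE n_neq0) expf_eq0 mulf_eq0 (negbTE n_neq0).
move=> /= /eqP v0.
move/negP: v_neq0; apply; apply/eqP/matrixP => a b.
by rewrite (ord1 a) mxE; have := v_const b i0; rewrite !mxE => ->.
Qed.

End PositiveWeights.

(* Invertibility of the shift forces ker A to be the constants, onto which J/n
   is the orthogonal projection. *)
Lemma MP_inverse_const_shift (R : fieldType) n (A : 'M[R]_n) :
  (n%:R : R) != 0 -> A^T = A -> A *m (const_mx 1 : 'M[R]_n) = 0 ->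
  const_shift A \in unitmx ->
  is_MP_inverse A (invmx (const_shift A) - n%:R^-1 *: const_mx 1).
Proof.
move=> n_neq0 AT AJ M_unit.
set M := const_shift A; set J : 'M[R]_n := const_mx 1; set j : R := n%:R^-1.
have JA : J *m A = 0 by apply: trmx_inj; rewrite trmx_mul AT trmx_const AJ trmx0.
have jJJ : j *: (J *m J) = J.
  apply/matrixP => a b; rewrite !mxE.
  under eq_bigr => l _ do rewrite ?mxE mulr1.
  by rewrite sumr_const card_ord mulVf.
have MJ : M *m J = J by rewrite /M /const_shift mulmxDl AJ add0r -scalemxAl jJJ.
have JM : J *m M = J by rewrite /M /const_shift mulmxDr JA add0r -scalemxAr jJJ.
have NJ : invmx M *m J = J by rewrite -{1}MJ mulmxA mulVmx // mul1mx.
have JN : J *m invmx M = J by rewrite -{1}JM -mulmxA mulmxV // mulmx1.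
have A_def : A = M - j *: J by rewrite /M /const_shift addrK.
set K : 'M[R]_n := 1%:M - j *: J.
have AX : A *m (invmx M - j *: J) = K.
  rewrite mulmxBr -scalemxAr AJ scaler0 subr0 {1}A_def mulmxBl mulmxV //.
  by rewrite -scalemxAl JN.
have XA : (invmx M - j *: J) *m A = K.
  rewrite mulmxBl -scalemxAl JA scaler0 subr0 {1}A_def mulmxBr mulVmx //.
  by rewrite -scalemxAr NJ.
have KT : K^T = K by rewrite /K linearB /= linearZ /= trmx1 trmx_const.
have KA : K *m A = A by rewrite mulmxBl mul1mx -scalemxAl JA scaler0 subr0.
have KX : K *m (invmx M - j *: J) = invmx M - j *: J.
  rewrite mulmxBl mul1mx -scalemxAl mulmxBr JN -scalemxAr jJJ subrr.
  by rewrite scaler0 subr0.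
by split; rewrite ?AX ?XA ?KA ?KX ?KT.
Qed.

Lemma MP_inverse_solves (R : realFieldType) n (A P : 'M[R]_n) (b : 'cV[R]_n) :
  A^T = A -> is_MP_inverse A P ->
  (forall z : 'cV[R]_n, A *m z = 0 -> (z^T *m b) 0 0 = 0) -> A *m (P *m b) = b.
Proof.
move=> AT [APA _ APT _] b_perp.
have AAP : A *m (A *m P) = A.
  by have := congr1 trmx APA; rewrite trmx_mul APT AT mulmxA.
set z := b - A *m (P *m b).
have Az : A *m z = 0 by rewrite mulmxBr !mulmxA -(mulmxA A A P) AAP subrr.
have /trmx_mul_self_eq0 /eqP : (z^T *m z) 0 0 = 0.
  rewrite {2}/z mulmxBr.
  have -> : z^T *m (A *m (P *m b)) = 0.
    by rewrite mulmxA -AT -trmx_mul Az trmx0 mul0mx.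
  by rewrite subr0 b_perp.
by rewrite subr_eq0 => /eqP.
Qed.

Lemma laplacian_pinv_solves (R : realFieldType) n m (s d : 'I_m -> 'I_n)
    (w : 'I_m -> R) (u v : 'I_n) :
  (forall k, 0 < w k) -> connected_graph s d ->
  let b := basis_vec R u - basis_vec R v in
  laplacian s d w *m (pinv (laplacian s d w) *m b) = b.
Proof.
move=> w_gt0 conn b.
have n_gt0 : (0 < n)%N := leq_ltn_trans (leq0n _) (ltn_ord u).
have n_neq0 : (n%:R : R) != 0 by rewrite pnatr_eq0 -lt0n.
have pinvP : is_MP_inverse (laplacian s d w) (pinv (laplacian s d w)).
  apply: epsilon_spec; eexists.
  apply: MP_inverse_const_shift n_neq0 (trmx_laplacian s d w) _ _.
    exact: laplacian_mul_const.
  exact: laplacian_const_shift_unit.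
apply: (MP_inverse_solves (trmx_laplacian s d w) pinvP) => z Lz.
rewrite -[_ *m b]trmxK trmx_mul trmxK mxE trmx_basis_diff_mul.
by rewrite (laplacian_kernel_const w_gt0 conn Lz u v) subrr.
Qed.

Section EffectiveResistance.

Variables (R : realFieldType) (n m : nat) (s d : 'I_m -> 'I_n) (w : 'I_m -> R).
Variables (u v : 'I_n).
Hypothesis w_gt0 : forall k, 0 < w k.
Hypothesis connected_sd : connected_graph s d.

Let y := pinv (laplacian s d w) *m (basis_vec R u - basis_vec R v).

Lemma lapform_pinv_basis_diff (x : 'cV[R]_n) : lapform s d w y x = x u 0 - x v 0.
Proof.
rewrite -laplacian_bilinear -[y^T *m _]trmxK trmx_mul trmxK trmx_laplacian.
by rewrite laplacian_pinv_solves // trmx_basis_diff_mul.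
Qed.

Lemma eff_res_lapform : eff_res s d w u v = lapform s d w y y.
Proof.
by rewrite lapform_pinv_basis_diff /eff_res -mulmxA trmx_basis_diff_mul.
Qed.

Lemma eff_res_cauchy_schwarz (x : 'cV[R]_n) :
  (x u 0 - x v 0) ^+ 2 <= eff_res s d w u v * lapform s d w x x.
Proof.
rewrite eff_res_lapform mulrC -lapform_pinv_basis_diff.
by apply: lapform_cauchy_schwarz => k; exact: ltW.
Qed.

Lemma eff_res_gt0 : u != v -> 0 < eff_res s d w u v.
Proof.
move=> u_neq_v; rewrite lt_def eff_res_lapform lapform_ge0 ?andbT; last first.
  by move=> k; exact: ltW.
apply/eqP => res0; have := eff_res_cauchy_schwarz (basis_vec R u).
rewrite eff_res_lapform res0 mul0r !mxE eqxx eq_sym (negbTE u_neq_v) subr0.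
by rewrite expr1n ler10.
Qed.

End EffectiveResistance.

Lemma psd_one_negative_term (T : Type) (R : realFieldType) (q p f : T -> R)
    (w0 r : R) (y : T) :
  w0 < 0 -> 0 < r -> (forall x, q x = w0 * f x ^+ 2 + p x) ->
  (forall x, f x ^+ 2 <= r * p x) -> f y = r -> p y = r ->
  (forall x, 0 <= q x) <-> `|w0| <= r^-1.
Proof.
move=> w0_lt0 r_gt0 q_def cs fy py.
rewrite ltr0_norm // -[r^-1]mul1r ler_pdivlMr //.
split=> [/(_ y) | w0r x]; first by rewrite q_def fy py; nra.
have p_ge0 : 0 <= p x.
  by rewrite -(pmulr_rge0 _ r_gt0); exact: le_trans (sqr_ge0 _) (cs x).
have := cs x; rewrite q_def; nra.
Qed.

Theorem theorem2 (R : realFieldType) (n m : nat)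
  (src dst : 'I_m.+1 -> 'I_n) (wt : 'I_m.+1 -> R) (k0 : 'I_m.+1) :
  simple_graph src dst ->
  wt k0 < 0 ->
  (forall k, k != k0 -> 0 < wt k) ->
  connected_graph (fun j => src (lift k0 j)) (fun j => dst (lift k0 j)) ->
  psd (laplacian src dst wt) <->
  `|wt k0| <= (eff_res (fun j => src (lift k0 j)) (fun j => dst (lift k0 j))
                       (fun j => wt (lift k0 j)) (src k0) (dst k0))^-1.
Proof.
move=> [loopless _] wt0_lt0 wt_gt0 conn.
set s' := fun j => _; set d' := fun j => _; set w' := fun j => _.
have w'_gt0 j : 0 < w' j by apply: wt_gt0; rewrite eq_sym neq_lift.
rewrite /psd; apply: (@psd_one_negative_term _ _
  (fun x => (x^T *m laplacian src dst wt *m x) 0 0)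
  (fun x => lapform s' d' w' x x)
  (fun x => x (src k0) 0 - x (dst k0) 0) _ _
  (pinv (laplacian s' d' w') *m (basis_vec R (src k0) - basis_vec R (dst k0))))
  => // [|x|x||].
- exact: eff_res_gt0.
- by rewrite laplacian_bilinear (lapform_bigD1 _ _ _ k0) expr2.
- exact: eff_res_cauchy_schwarz.
- by rewrite eff_res_lapform // lapform_pinv_basis_diff.
- by rewrite eff_res_lapform.
Qed.
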